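(* Let $G$ be a finitely generated group which is fully residually $H$, where $H$ is finitely generated. Let $X, X'$ be finite generating sets for $G$ and $Y, Y'$ finite generating sets for $H$. Then $C_{G,X}^{H,Y} \preceq C_{G,X'}^{H,Y'}$.
   Context: $G$ is fully residually $H$ if for every finite $S \subseteq G-\{1\}$ there is a homomorphism $\phi:G\to H$ with $1 \notin \phi(S)$. For a homomorphism $\phi$, $|\phi|_X^Y := \max_{x\in X}|\phi(x)|_Y$ (word length in $Y$). $C_{G,X}^{H,Y}(R) := \min\{|\phi|_X^Y : \phi:G\to H,\ 1\notin\phi(B_R(G,X)-\{1\})\}$, where $B_R(G,X)$ is the closed ball of radius $R$ about $1$ in the $X$-word metric. For $f,g:\mathbb{N}\to\mathbb{N}$, $f\preceq g$ means there is a constant $K$ with $f(R)\le Kg(KR)+K$ for all $R$. *)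

From Stdlib Require Import List Arith ClassicalEpsilon.
Import ListNotations.

Record group := Group {
  carrier :> Type;
  gmul : carrier -> carrier -> carrier;
  ginv : carrier -> carrier;
  gone : carrier;
  gmulA : forall x y z, gmul x (gmul y z) = gmul (gmul x y) z;
  gmul1l : forall x, gmul gone x = x;
  gmul1r : forall x, gmul x gone = x;
  gmulVl : forall x, gmul (ginv x) x = gone;
  gmulVr : forall x, gmul x (ginv x) = gone
}.

Arguments gmul {g}.
Arguments ginv {g}.
Arguments gone {g}.

Definition letter_val {G : group} (l : bool * G) : G :=
  if fst l then ginv (snd l) else snd l.

Definition eval_word {G : group} (w : list (bool * G)) : G :=
  fold_right (fun l acc => gmul (letter_val l) acc) gone w.

Definition word_over {G : group} (X : list G) (w : list (bool * G)) : Prop :=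
  forall l, In l w -> In (snd l) X.

Definition generates {G : group} (X : list G) : Prop :=
  forall g : G, exists w, word_over X w /\ eval_word w = g.

Definition is_hom {G H : group} (phi : G -> H) : Prop :=
  forall x y, phi (gmul x y) = gmul (phi x) (phi y).

(* least natural number satisfying P (classical choice; 0 if none) *)
Definition natmin (P : nat -> Prop) : nat :=
  epsilon (inhabits 0) (fun n => P n /\ forall m, P m -> n <= m).

Definition wordlen {G : group} (X : list G) (g : G) : nat :=
  natmin (fun n => exists w, word_over X w /\ length w = n /\ eval_word w = g).

Definition homnorm {G H : group} (X : list G) (Y : list H) (phi : G -> H) : nat :=
  fold_right Nat.max 0 (map (fun x => wordlen Y (phi x)) X).

Definition ball {G : group} (X : list G) (R : nat) (g : G) : Prop :=
  wordlen X g <= R.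

Definition Cfun (G : group) (X : list G) (H : group) (Y : list H) (R : nat) : nat :=
  natmin (fun n => exists phi : G -> H, is_hom phi /\ homnorm X Y phi = n /\
            (forall g, ball X R g -> g <> gone -> phi g <> gone)).

Definition fully_residually (G H : group) : Prop :=
  forall S : list G, (forall s, In s S -> s <> gone) ->
    exists phi : G -> H, is_hom phi /\ (forall s, In s S -> phi s <> gone).

Definition preceq (f g : nat -> nat) : Prop :=
  exists K, forall R, f R <= K * g (K * R) + K.

(** Write [c] for the largest [X']-length of a letter of [X] and [d] for the
    largest [Y]-length of a letter of [Y']. Word length is [c]-Lipschitz from
    [X] to [X'], so the [X]-ball of radius [R] lies in the [X']-ball of radius
    [c R], and a homomorphism injective on the latter is injective on the
    former. Rewriting generators through words gives
    [|phi|_X^Y <= d |phi|_X^Y' <= c d |phi|_X'^Y'], so an optimal homomorphism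
    for [C_{G,X'}^{H,Y'}(c R)] shows [C_{G,X}^{H,Y}(R) <= c d C_{G,X'}^{H,Y'}(c R)].
    Balls are finite, so full residuality guarantees that this optimum is
    attained. *)

From Stdlib Require Import List Arith Lia ClassicalEpsilon.
Import ListNotations.

Lemma natmin_spec (P : nat -> Prop) :
  (exists n, P n) -> P (natmin P) /\ forall m, P m -> natmin P <= m.
Proof.
  intros [n Pn]. unfold natmin. apply epsilon_spec.
  induction n as [n IH] using lt_wf_ind.
  destruct (excluded_middle_informative (exists m, m < n /\ P m)) as [[m [lt_mn Pm]]|none].
  - exact (IH m lt_mn Pm).
  - exists n. split; [exact Pn|]. intros m Pm.
    destruct (le_lt_dec n m) as [le_nm|lt_mn]; [exact le_nm|].
    exfalso; apply none; eauto.
Qed.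

Definition maxl {A : Type} (f : A -> nat) (l : list A) : nat :=
  fold_right Nat.max 0 (map f l).

Lemma maxl_ge {A : Type} (f : A -> nat) (l : list A) (x : A) :
  In x l -> f x <= maxl f l.
Proof.
  unfold maxl; induction l as [|a l IH]; simpl; [tauto|].
  intros [<-|inl]; [lia|]. specialize (IH inl). lia.
Qed.

Lemma maxl_lub {A : Type} (f : A -> nat) (l : list A) (b : nat) :
  (forall x, In x l -> f x <= b) -> maxl f l <= b.
Proof.
  unfold maxl; induction l as [|a l IH]; simpl; intros le_b; [lia|].
  apply Nat.max_lub; auto.
Qed.

Section Words.
Variable G : group.
Implicit Types (g h : G) (B : list G) (w : list (bool * G)).

Lemma gmul_cancel_l (a g h : G) : gmul a g = gmul a h -> g = h.
Proof.
  intro e. rewrite <- (gmul1l G g), <- (gmul1l G h), <- (gmulVl G a), <- !gmulA, e.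
  reflexivity.
Qed.

Lemma ginv_unique g h : gmul g h = gone -> h = ginv g.
Proof.
  intro e. rewrite <- (gmul1l G h), <- (gmulVl G g), <- gmulA, e, gmul1r. reflexivity.
Qed.

Lemma ginv_gmul g h : ginv (gmul g h) = gmul (ginv h) (ginv g).
Proof.
  symmetry; apply ginv_unique.
  rewrite gmulA, <- (gmulA G g h), gmulVr, gmul1r, gmulVr. reflexivity.
Qed.

Lemma ginv_involutive g : ginv (ginv g) = g.
Proof. symmetry; apply ginv_unique, gmulVl. Qed.

Lemma eval_word_app w1 w2 :
  eval_word (w1 ++ w2) = gmul (eval_word w1) (eval_word w2).
Proof.
  induction w1 as [|l w1 IH]; simpl; [now rewrite gmul1l|].
  now rewrite IH, gmulA.
Qed.

Definition inv_word w : list (bool * G) :=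
  rev (map (fun l => (negb (fst l), snd l)) w).

Lemma length_inv_word w : length (inv_word w) = length w.
Proof. unfold inv_word; now rewrite length_rev, length_map. Qed.

Lemma eval_inv_word w : eval_word (inv_word w) = ginv (eval_word w).
Proof.
  unfold inv_word; induction w as [|[[|] a] w IH]; simpl.
  - apply ginv_unique, gmul1l.
  - rewrite eval_word_app, IH; unfold letter_val; simpl.
    now rewrite gmul1r, ginv_gmul, ginv_involutive.
  - rewrite eval_word_app, IH; unfold letter_val; simpl.
    now rewrite gmul1r, ginv_gmul.
Qed.

Lemma word_over_app B w1 w2 :
  word_over B w1 -> word_over B w2 -> word_over B (w1 ++ w2).
Proof. intros o1 o2 l inl; apply in_app_or in inl as [in1|in2]; auto. Qed.

Lemma word_over_inv_word B w : word_over B w -> word_over B (inv_word w).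
Proof.
  unfold inv_word; intros o l inl.
  apply in_rev, in_map_iff in inl as [l0 [<- inl0]]. exact (o l0 inl0).
Qed.

Lemma wordlen_spec B g : generates B ->
  exists w, word_over B w /\ length w = wordlen B g /\ eval_word w = g.
Proof.
  intro genB. destruct (genB g) as [w [o e]].
  refine (proj1 (natmin_spec
    (fun n => exists w, word_over B w /\ length w = n /\ eval_word w = g) _)); eauto.
Qed.

Lemma wordlen_le_length B w : word_over B w -> wordlen B (eval_word w) <= length w.
Proof.
  intro o. refine (proj2 (natmin_spec
    (fun n => exists v, word_over B v /\ length v = n /\ eval_word v = eval_word w) _) _ _);
    eauto.
Qed.

Section Generated.
Variables (B : list G) (genB : generates B).

Lemma wordlen_gmul g h : wordlen B (gmul g h) <= wordlen B g + wordlen B h.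
Proof.
  destruct (wordlen_spec B g genB) as [u [ou [<- <-]]].
  destruct (wordlen_spec B h genB) as [v [ov [<- <-]]].
  rewrite <- eval_word_app, <- length_app.
  apply wordlen_le_length, word_over_app; assumption.
Qed.

Lemma wordlen_ginv g : wordlen B (ginv g) <= wordlen B g.
Proof.
  destruct (wordlen_spec B g genB) as [u [ou [<- <-]]].
  rewrite <- eval_inv_word, <- (length_inv_word u).
  apply wordlen_le_length, word_over_inv_word; assumption.
Qed.

Lemma wordlen_eval_word_le (A : list G) (k : nat) :
  (forall a, In a A -> wordlen B a <= k) ->
  forall w, word_over A w -> wordlen B (eval_word w) <= k * length w.
Proof.
  intros le_k w; induction w as [|[b a] w IH]; intros o; simpl.
  - rewrite Nat.mul_0_r. apply (wordlen_le_length B []). intros l [].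
  - assert (wordlen B (letter_val (b, a)) <= k).
    { assert (wordlen B a <= k) by exact (le_k a (o _ (in_eq _ _))).
      unfold letter_val; destruct b; simpl; [pose proof (wordlen_ginv a)|]; lia. }
    assert (wordlen B (eval_word w) <= k * length w)
      by (apply IH; intros l inl; apply o, in_cons, inl).
    pose proof (wordlen_gmul (letter_val (b, a)) (eval_word w)). nia.
Qed.

Lemma wordlen_lipschitz (A : list G) (genA : generates A) g :
  wordlen B g <= maxl (wordlen B) A * wordlen A g.
Proof.
  destruct (wordlen_spec A g genA) as [w [o [<- <-]]].
  apply (wordlen_eval_word_le A); [|assumption].
  intros a ina; apply maxl_ge, ina.
Qed.

End Generated.

Fixpoint words B (n : nat) : list (list (bool * G)) :=
  match n with
  | 0 => [[]]
  | S n => flat_map (fun w => flat_map (fun b => [(false, b) :: w; (true, b) :: w]) B)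
             (words B n)
  end.

Lemma in_words B w : word_over B w -> In w (words B (length w)).
Proof.
  induction w as [|[b a] w IH]; intros o; simpl; [now left|].
  apply in_flat_map; exists w; split.
  - apply IH; intros l inl; apply o, in_cons, inl.
  - apply in_flat_map; exists a; split; [exact (o _ (in_eq _ _))|].
    destruct b; simpl; auto.
Qed.

Lemma ball_finite B (genB : generates B) (R : nat) :
  exists L, forall g, ball B R g -> In g L.
Proof.
  exists (flat_map (fun n => map eval_word (words B n)) (seq 0 (S R))).
  intros g in_ball. destruct (wordlen_spec B g genB) as [w [o [len <-]]].
  apply in_flat_map; exists (length w); split.
  - apply in_seq. unfold ball in in_ball. lia.
  - apply in_map, in_words, o.
Qed.

End Words.


Section Homomorphisms.
Variables (G H : group) (phi : G -> H) (hom : is_hom phi).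

Lemma hom_gone : phi gone = gone.
Proof.
  apply (gmul_cancel_l H (phi gone)).
  now rewrite <- hom, gmul1l, gmul1r.
Qed.

Lemma hom_ginv (g : G) : phi (ginv g) = ginv (phi g).
Proof. apply ginv_unique. now rewrite <- hom, gmulVr, hom_gone. Qed.

Definition map_word (w : list (bool * G)) : list (bool * H) :=
  map (fun l => (fst l, phi (snd l))) w.

Lemma eval_map_word w : eval_word (map_word w) = phi (eval_word w).
Proof.
  induction w as [|[[|] a] w IH]; simpl.
  - symmetry; exact hom_gone.
  - unfold letter_val; simpl. now rewrite IH, hom, hom_ginv.
  - now rewrite IH, hom.
Qed.

Lemma homnorm_change_target (X : list G) (Y Y' : list H) :
  generates Y -> generates Y' ->
  homnorm X Y phi <= maxl (wordlen Y) Y' * homnorm X Y' phi.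
Proof.
  intros genY genY'. apply (maxl_lub (fun x => wordlen Y (phi x))). intros x inX.
  pose proof (wordlen_lipschitz H Y genY Y' genY' (phi x)).
  pose proof (maxl_ge (fun x => wordlen Y' (phi x)) X x inX).
  change (homnorm X Y' phi) with (maxl (fun x => wordlen Y' (phi x)) X). nia.
Qed.

Lemma homnorm_change_source (X X' : list G) (Y : list H) :
  generates X' -> generates Y ->
  homnorm X Y phi <= homnorm X' Y phi * maxl (wordlen X') X.
Proof.
  intros genX' genY. apply (maxl_lub (fun x => wordlen Y (phi x))). intros x inX.
  destruct (wordlen_spec G X' x genX') as [w [o [len <-]]].
  rewrite <- eval_map_word.
  transitivity (homnorm X' Y phi * length (map_word w)).
  - apply (wordlen_eval_word_le H Y genY (map phi X')).
    + intros a ina. apply in_map_iff in ina as [x' [<- inX']].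
      exact (maxl_ge (fun x => wordlen Y (phi x)) X' x' inX').
    + intros l inl. unfold map_word in inl.
      apply in_map_iff in inl as [l0 [<- inl0]]; simpl. apply in_map, o, inl0.
  - unfold map_word; rewrite length_map, len.
    apply Nat.mul_le_mono_l, maxl_ge, inX.
Qed.

End Homomorphisms.

Lemma separating_hom_exists (G H : group) (L : list G) :
  fully_residually G H ->
  exists phi : G -> H, is_hom phi /\ forall g, In g L -> g <> gone -> phi g <> gone.
Proof.
  intro fr.
  set (nontriv := fun g : G => if excluded_middle_informative (g = gone) then false else true).
  destruct (fr (filter nontriv L)) as [phi [hom sep]].
  - intros s ins. apply filter_In in ins as [_ ns]. unfold nontriv in ns.
    destruct (excluded_middle_informative (s = gone)); congruence.
  - exists phi; split; [exact hom|]. intros g inL ng. apply sep, filter_In.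
    unfold nontriv; destruct (excluded_middle_informative (g = gone)); tauto.
Qed.

Definition separates_ball {G H : group} (X : list G) (R : nat) (phi : G -> H) : Prop :=
  forall g, ball X R g -> g <> gone -> phi g <> gone.

Lemma Cfun_attained (G H : group) (X : list G) (Y : list H) (R : nat) :
  generates X -> fully_residually G H ->
  exists phi : G -> H,
    is_hom phi /\ homnorm X Y phi = Cfun G X H Y R /\ separates_ball X R phi.
Proof.
  intros genX fr.
  destruct (ball_finite G X genX R) as [L ballL].
  destruct (separating_hom_exists G H L fr) as [phi [hom sep]].
  refine (proj1 (natmin_spec (fun n => exists phi : G -> H,
    is_hom phi /\ homnorm X Y phi = n /\ separates_ball X R phi) _)).
  exists (homnorm X Y phi), phi. repeat split; auto.
  intros g in_ball. apply sep, ballL, in_ball.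
Qed.

Lemma Cfun_le (G H : group) (X : list G) (Y : list H) (R : nat) (phi : G -> H) :
  is_hom phi -> separates_ball X R phi -> Cfun G X H Y R <= homnorm X Y phi.
Proof.
  intros hom sep. refine (proj2 (natmin_spec (fun n => exists phi : G -> H,
    is_hom phi /\ homnorm X Y phi = n /\ separates_ball X R phi) _) _ _); eauto.
Qed.

Lemma separates_ball_lipschitz (G H : group) (X X' : list G) (R R' : nat) (phi : G -> H) :
  generates X -> generates X' -> maxl (wordlen X') X * R <= R' ->
  separates_ball X' R' phi -> separates_ball X R phi.
Proof.
  intros genX genX' le_R sep g in_ball. apply sep. unfold ball in *.
  pose proof (wordlen_lipschitz G X' genX' X genX g). nia.
Qed.

Theorem mainTheorem6 (G H : group) (X X' : list G) (Y Y' : list H) :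
  generates X -> generates X' -> generates Y -> generates Y' ->
  fully_residually G H ->
  preceq (Cfun G X H Y) (Cfun G X' H Y').
Proof.
  intros genX genX' genY genY' fr.
  set (c := maxl (wordlen X') X). set (d := maxl (wordlen Y) Y').
  exists (c * d + c + 1). intro R.
  destruct (Cfun_attained G H X' Y' ((c * d + c + 1) * R) genX' fr)
    as [phi [hom [<- sep]]].
  assert (sepR : separates_ball X R phi).
  { apply (separates_ball_lipschitz G H X X' R ((c * d + c + 1) * R)); auto. nia. }
  pose proof (Cfun_le G H X Y R phi hom sepR).
  pose proof (homnorm_change_target G H phi X Y Y' genY genY').
  pose proof (homnorm_change_source G H phi hom X X' Y' genX' genY').
  subst c d. nia.
Qed.
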